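(* There is an absolute constant $C$ such that the following holds. Let $A=(\Sigma, Q, Q_0, \delta, F)$ be an NFA with $n$ states that remembers the last symbol. For each symbol $a \in \Sigma$, let $Q_a=\bigcup_{q\in Q}\delta(q,a) \subseteq Q$ be the set of states reachable by a transition by $a$, and let $n_1 = \max_{a \in \Sigma} |Q_a|$. Then there is a DFA with at most $2^{n-n_1} \cdot (g(n_1)+Cn_1^2)$ states recognizing $L(A)$.
   Context: Landau's function is $g(m)=\max\{\operatorname{lcm}(p_1,\ldots,p_k) : k\geqslant 1,\ p_i\geqslant 1 \text{ integers},\ p_1+\cdots+p_k\leqslant m\}$. An NFA is a quintuple $(\Sigma,Q,Q_0,\delta,F)$ with set of initial states $Q_0\subseteq Q$, transition function $\delta\colon Q\times\Sigma\to 2^Q$ and accepting states $F$. A DFA is an NFA with one initial state and exactly one transition from each state by each symbol. An NFA remembers the last symbol if its state set is a disjoint union of subsets $P_a$ ($a\in\Sigma$) with $\delta(q,a)\subseteq P_a$ for all $q\in Q$, $a\in\Sigma$. *)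

From mathcomp Require Import all_boot.
Set Implicit Arguments. Unset Strict Implicit. Unset Printing Implicit Defensive.

(* Landau's function g(m) = max lcm(p_1,...,p_k) over p_i >= 1 with
   p_1 + ... + p_k <= m.  Since k <= m, a choice of parts is encoded as
   f : 'I_m -> 'I_(m+1), the parts being the nonzero values of f.
   (The empty choice gives lcm 1, so g(0) = 1; for m >= 1 this agrees
   with requiring k >= 1.) *)
Definition landau (m : nat) : nat :=
  \max_(f : {ffun 'I_m -> 'I_m.+1} | \sum_(i < m) (f i : nat) <= m)
     \big[lcmn/1]_(i < m | (f i : nat) != 0) (f i : nat).

Record nfa (Sigma Q : finType) := NFA {
  nfa_init : {set Q};
  nfa_delta : Q -> Sigma -> {set Q};
  nfa_final : {set Q}
}.

Definition nfa_step (Sigma Q : finType) (A : nfa Sigma Q) (S : {set Q}) (a : Sigma)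
  : {set Q} := \bigcup_(q in S) nfa_delta A q a.

Definition nfa_reach (Sigma Q : finType) (A : nfa Sigma Q) (w : seq Sigma) : {set Q} :=
  foldl (nfa_step A) (nfa_init A) w.

Definition nfa_accepts (Sigma Q : finType) (A : nfa Sigma Q) (w : seq Sigma) : bool :=
  nfa_reach A w :&: nfa_final A != set0.

Record dfa (Sigma D : finType) := DFA {
  dfa_init : D;
  dfa_delta : D -> Sigma -> D;
  dfa_final : {set D}
}.

Definition dfa_accepts (Sigma D : finType) (M : dfa Sigma D) (w : seq Sigma) : bool :=
  foldl (dfa_delta M) (dfa_init M) w \in dfa_final M.

Definition remembers_last (Sigma Q : finType) (A : nfa Sigma Q) : Prop :=
  exists P : Sigma -> {set Q},
    [/\ (forall a b, a != b -> [disjoint P a & P b]),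
        \bigcup_(a : Sigma) P a = [set: Q]
      & forall q a, nfa_delta A q a \subset P a].

Definition Qsym (Sigma Q : finType) (A : nfa Sigma Q) (a : Sigma) : {set Q} :=
  \bigcup_(q : Q) nfa_delta A q a.

Definition n1 (Sigma Q : finType) (A : nfa Sigma Q) : nat :=
  \max_(a : Sigma) #|Qsym A a|.

From mathcomp Require Import all_boot zify.
Set Implicit Arguments. Unset Strict Implicit. Unset Printing Implicit Defensive.

(* Fix a letter a with |Q_a| = n_1.  After any letter b <> a the subset
   automaton is inside ~: P_a, a set of at most n - n_1 states; hence every
   reachable subset is empty or an a-iterate delta(T, a^i) of the initial set or
   of a nonempty subset T of ~: P_a, and it remains to see that i |-> delta(T, a^i)
   takes at most g(n_1) + O(n_1^2) values.  In the graph of the letter a, all of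
   whose edges end in Q_a, the period of a vertex (gcd of the lengths of the
   closed walks through it) is constant on strongly connected components and
   bounded by their size, so the lcm D of the periods is at most g(n_1).  For
   lengths j, j' >= 9 n_1^2 + n_1 congruent modulo D, a walk of length j is cut
   down by removing loops to a walk of length at most n_1, which a Frobenius-type
   argument then refills with cycles at its vertices to length j'. *)

(* Negative Bezout coefficients are avoided because -x = (c - 1) * x modulo c. *)
Lemma bezout_modn a b c : 0 < c -> exists u v, u * a + v * b = gcdn a b %[mod c].
Proof.
move=> c_gt0; case: (posnP a) => [->|a_gt0]; first by exists 0, 1; rewrite gcd0n mul1n.
have [x _ /dvdnP [y def_y]] := Bezoutl b a_gt0.
exists y, (x * c.-1); rewrite -def_y -addnA -mulnDl -mulnS prednK //.
by rewrite mulnAC addnC modnMDl.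
Qed.

(* The residues modulo c of the elements of P are generated by a closure that
   stabilises within c rounds, each adding at most B, so every residue of P has
   a representative in P below c * B; Bezout shows that the residues of all
   multiples of the gcd of G are reached. *)
Section Frobenius.

Variables (B c : nat) (G : pred nat) (P : nat -> Prop).
Hypotheses (c_gt0 : 0 < c) (c_le : c <= B) (Gc : G c) (P0 : P 0)
  (PD : forall x z, P x -> G z -> z <= B -> P (x + z)).

Definition residue x : 'I_c := Ordinal (ltn_pmod x c_gt0).

Lemma residueD x y : residue (residue x + y) = residue (x + y).
Proof. by apply: val_inj; rewrite /= modnDml. Qed.

Definition residue_step (S : {set 'I_c}) : {set 'I_c} :=
  [set r' | [|| r' == residue 0, r' \in S |
             [exists r in S, exists z : 'I_B.+1, G z && (r' == residue (r + z))]]].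

Lemma residue_step_mono : {homo residue_step : S S' / S \subset S'}.
Proof.
move=> S S' /subsetP sSS'; apply/subsetP => r; rewrite !inE.
case/or3P => [-> // | /sSS' -> | /existsP [r0 /andP [/sSS' Sr0 r0_step]]]; first by rewrite orbT.
by apply/or3P/Or33/existsP; exists r0; rewrite Sr0.
Qed.

Lemma mem_iter_residue_step t r : r \in iter t residue_step set0 ->
  exists x, [/\ P x, x <= t * B & residue x = r].
Proof.
elim: t r => [|t IH] r; first by rewrite inE.
rewrite inE => /or3P [/eqP -> | /IH [x [Px le_x <-]] |].
- by exists 0.
- by exists x; split; rewrite // mulSn (leq_trans le_x) ?leq_addl.
case/existsP => r0 /andP [/IH [x [Px le_x <-]] /existsP [z /andP [Gz /eqP ->]]].
exists (x + z); rewrite residueD; split => //.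
- by apply: PD => //; rewrite -ltnS.
- by rewrite mulSn addnC leq_add // -ltnS.
Qed.

Definition reached x := residue x \in fixset residue_step.

Lemma reached0 : reached 0.
Proof. by rewrite /reached -(fixsetK residue_step_mono) !inE eqxx. Qed.

Lemma reachedD x z : reached x -> G z -> z <= B -> reached (x + z).
Proof.
move=> gx Gz le_zB; rewrite /reached -(fixsetK residue_step_mono) inE -residueD.
apply/or3P/Or33/existsP; exists (residue x); rewrite [_ \in _]gx; apply/existsP.
by exists (Ordinal (le_zB : z < B.+1)); rewrite Gz eqxx.
Qed.

Lemma reached_mod x y : x = y %[mod c] -> reached x = reached y.
Proof. by move=> eq_xy; rewrite /reached (_ : residue x = residue y) //; apply: val_inj. Qed.

Definition keeps_reached y := forall x, reached x -> reached (x + y).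

Lemma keeps_reachedD y y' : keeps_reached y -> keeps_reached y' -> keeps_reached (y + y').
Proof. by move=> gy gy' x gx; rewrite addnA; apply/gy'/gy. Qed.

Lemma keeps_reachedM n y : keeps_reached y -> keeps_reached (n * y).
Proof.
move=> gy; elim: n => [x|n IH]; first by rewrite mul0n addn0.
by rewrite mulSn; apply: keeps_reachedD.
Qed.

Lemma keeps_reached_gcd : keeps_reached (\big[gcdn/0]_(z < B.+1 | G z) z).
Proof.
elim/big_rec: _ => [x | z g Gz gg x gx]; first by rewrite addn0.
have [u [v uv_gcd]] := bezout_modn z g c_gt0.
rewrite -(reached_mod (x := x + (u * z + v * g))); last by rewrite -modnDmr uv_gcd modnDmr.
apply: (keeps_reachedD _ (keeps_reachedM _ gg)) gx; apply: keeps_reachedM => y gy.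
by apply: reachedD => //; rewrite -ltnS.
Qed.

Lemma frobenius x : \big[gcdn/0]_(z < B.+1 | G z) z %| x -> c * B <= x -> P x.
Proof.
set g := \big[gcdn/0]_(z < B.+1 | G z) z; move=> /dvdnP [q ->] le_cB.
have := keeps_reachedM q keeps_reached_gcd reached0; rewrite add0n /reached.
move/(subsetP (iter_sub_fix residue_step_mono _)) => /mem_iter_residue_step [x0 [Px0 le_x0]].
rewrite card_ord in le_x0 => /(congr1 val) /= eq_mod.
have /dvdnP [m def_m] : c %| q * g - x0 by rewrite -eqn_mod_dvd ?eq_mod //; lia.
have -> : q * g = x0 + m * c by lia.
elim: m {def_m} => [|m IH]; first by rewrite addn0.
by rewrite mulSnr addnA; apply: PD.
Qed.

End Frobenius.

Lemma lcm_le_landau (I : finType) (S : {set I}) (p : I -> nat) :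
  \sum_(i in S) p i <= #|S| -> \big[lcmn/1]_(i in S | p i != 0) p i <= landau #|S|.
Proof.
move=> sum_le; pose f : {ffun 'I_#|S| -> 'I_#|S|.+1} := [ffun j => inord (p (enum_val j))].
have fE j : f j = p (enum_val j) :> nat.
  rewrite ffunE inordK // ltnS (leq_trans _ sum_le) //.
  by rewrite (bigD1 (enum_val j)) ?enum_valP //= leq_addr.
have -> : \big[lcmn/1]_(i in S | p i != 0) p i = \big[lcmn/1]_(j | f j != 0 :> nat) f j.
  by rewrite big_enum_val_cond; apply: eq_big => [j | j _]; rewrite fE.
apply: (@leq_bigmax_cond _ (fun f : {ffun _ -> 'I_#|S|.+1} => \sum_j (f j : nat) <= #|S|)).
by rewrite (eq_bigr _ (fun j _ => fE j)) -big_enum_val.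
Qed.

Lemma landau_gt0 m : 0 < landau m.
Proof.
have zero_sum : \sum_(i < m) ([ffun=> ord0] : {ffun 'I_m -> 'I_m.+1}) i <= m.
  by rewrite big1 // => i _; rewrite ffunE.
apply: leq_trans (leq_bigmax_cond _ zero_sum).
by rewrite big_pred0 // => i; rewrite ffunE.
Qed.

Section UnaryAutomaton.

Variables (V : finType) (delta : V -> {set V}).

Definition walk (w : nat -> V) l := forall i, i < l -> w i.+1 \in delta (w i).

Definition reach_in l x y := exists w, [/\ w 0 = x, w l = y & walk w l].

Fixpoint reach_inb l x y :=
  if l is l'.+1 then [exists z in delta x, reach_inb l' z y] else x == y.

Lemma reach_inP l x y : reflect (reach_in l x y) (reach_inb l x y).
Proof.
elim: l x => [|l IH] x /=.
  by apply: (iffP eqP) => [<-|[w [<- <- _]]] //; exists (fun=> x).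
apply: (iffP existsP) => [[z /andP [xz /IH [w [w0 wl ww]]]] | [w [w0 wl ww]]].
  exists (fun i => if i is i'.+1 then w i' else x).
  by split => // [[|i]] lt_il /=; [rewrite w0 | apply: ww].
exists (w 1); rewrite -w0 ww //=; apply/IH.
by exists (w \o succn); split => // i lt_il; apply: ww.
Qed.

Definition walk_cat (w w' : nat -> V) l i := if i <= l then w i else w' (i - l).

Lemma reach_in_cat a b x y z : reach_in a x y -> reach_in b y z -> reach_in (a + b) x z.
Proof.
move=> [w [w0 wa ww]] [w' [w'0 w'b ww']]; exists (walk_cat w w' a).
rewrite /walk_cat leq0n; split => //.
  case: ifP => [le_aba | _]; last by rewrite addKn.
  have b0 : b = 0 by lia.
  by rewrite b0 addn0 wa -w'0 -w'b b0.
move=> i lt_i; rewrite /walk_cat; case: (ltngtP i a) => [lt_ia | lt_ai | eq_ia]; last subst i.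
- exact: ww.
- by rewrite subSn 1?ltnW //; apply: ww'; lia.
- by rewrite subSnn wa -w'0; apply: ww'; lia.
Qed.

Lemma reach_in_sub w l i j : walk w l -> i <= j <= l -> reach_in (j - i) (w i) (w j).
Proof.
move=> ww /andP [le_ij le_jl]; exists (fun t => w (i + t)).
by rewrite addn0 subnKC //; split=> // t lt_t; rewrite addnS; apply: ww; lia.
Qed.

Lemma reach_inS l x y : reach_in l.+1 x y <-> exists2 z, reach_in l x z & y \in delta z.
Proof.
split=> [[w [<- <- ww]] | [z xz zy]].
  exists (w l); last exact: ww.
  by rewrite -[l in reach_in l]subn0; apply: (reach_in_sub ww); rewrite leqnSn.
rewrite -addn1; apply: (reach_in_cat xz).
by exists (fun i => if i is 0 then z else y); split => // [[]].
Qed.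

Definition cut_loop (w : nat -> V) i i' t := if t <= i then w t else w (t + (i' - i)).

Lemma cut_loop_shift w i i' t : i <= i' <= t -> w i = w i' ->
  cut_loop w i i' (t - (i' - i)) = w t.
Proof.
move=> le_ii't wii'; rewrite /cut_loop; case: ifP => le_ti; last by congr w; lia.
by rewrite (_ : t = i') -?wii'; [congr w | ]; lia.
Qed.

Lemma walk_cut_loop w l i i' : walk w l -> i <= i' <= l -> w i = w i' ->
  [/\ cut_loop w i i' 0 = w 0, cut_loop w i i' (l - (i' - i)) = w l
    & walk (cut_loop w i i') (l - (i' - i))].
Proof.
move=> ww le_ii'l wii'; rewrite cut_loop_shift //; split => //.
move=> t lt_t; rewrite /cut_loop; case: (ltngtP t i) => [lt_ti | lt_it | eq_ti]; last subst t.
- by apply: ww; lia.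
- by rewrite addSn; apply: ww; lia.
- by rewrite addSn subnKC ?wii'; [apply: ww | ]; lia.
Qed.

Lemma reach_in_cut_loop w l i i' : walk w l -> i <= i' <= l -> w i = w i' ->
  reach_in (l - (i' - i)) (w 0) (w l).
Proof. by move=> ww le_ii' wii'; have [<- <- ?] := walk_cut_loop ww le_ii' wii'; eexists. Qed.

Definition targets := \bigcup_x delta x.

Local Notation k := #|targets|.

Lemma walk_targets w l i : walk w l -> 0 < i <= l -> w i \in targets.
Proof.
move=> ww /andP [i_gt0 le_il]; apply/bigcupP; exists (w i.-1) => //.
by rewrite -{1}(prednK i_gt0); apply: ww; rewrite prednK.
Qed.

Lemma walk_repeat w l : walk w l -> k < l ->
  exists i i', [/\ 0 < i, i < i' <= k.+1 & w i = w i'].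
Proof.
move=> ww lt_kl; pose f (t : 'I_k.+1) := w t.+1.
have /injectivePn [t [t' neq_tt' ftt']] : ~~ injectiveb f.
  apply/negP => /injectiveP inj_f; have : #|[set f t | t in 'I_k.+1]| <= k.
    apply/subset_leq_card/subsetP => _ /imsetP [t _ ->].
    by apply: (walk_targets ww); have := ltn_ord t; lia.
  by rewrite card_imset // card_ord ltnn.
have := ltn_ord t; have := ltn_ord t'.
case: (ltngtP t t') => [lt_tt' | lt_t't | /val_inj eq_tt'].
- by exists t.+1, t'.+1; split => //; lia.
- by exists t'.+1, t.+1; split => //; lia.
- by rewrite eq_tt' eqxx in neq_tt'.
Qed.

Lemma reach_in_short l x y : reach_in l x y -> exists2 l', l' <= k & reach_in l' x y.
Proof.
elim/ltn_ind: l x y => l IH x y [w [<- <- ww]].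
have [le_lk | lt_kl] := leqP l k; first by exists l => //; exists w.
have [i [i' [i_gt0 /andP [lt_ii' le_i'k] wii']]] := walk_repeat ww lt_kl.
by apply: (IH (l - (i' - i))); [lia | apply: reach_in_cut_loop ww _ wii'; lia].
Qed.

Lemma simple_cycle l u : reach_in l u u -> 0 < l ->
  exists l' w, [/\ 0 < l', w 0 = u, w l' = u, walk w l' &
                   forall s t, s < l' -> t < l' -> w s = w t -> s = t].
Proof.
elim/ltn_ind: l => l IH [w [w0 wl ww]] l_gt0.
have [/injectiveP inj_w | ] := boolP (injectiveb (fun t : 'I_l => w t)).
  exists l, w; split => // s t lt_sl lt_tl wst.
  by have [] := inj_w (Ordinal lt_sl) (Ordinal lt_tl) wst.
case/injectivePn => s [t neq_st wst].
have [i [i' [lt_ii' lt_i'l wii']]] : exists i i', [/\ i < i', i' < l & w i = w i'].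
  have := ltn_ord s; have := ltn_ord t.
  case: (ltngtP s t) => [lt_st | lt_ts | /val_inj eq_st].
  - by exists s, t; split.
  - by exists t, s; split.
  - by rewrite eq_st eqxx in neq_st.
have shorter : reach_in (l - (i' - i)) u u.
  by rewrite -{1}w0 -wl; apply: reach_in_cut_loop ww _ wii'; lia.
by apply: (IH _ _ shorter); lia.
Qed.


(* Closed walks of length at most 3k already generate all of them
   ([period_dvd]): a longer closed walk through u splits at a repeated vertex
   into a shorter one and a loop, and the loop is joined to u by two paths of
   length at most k. *)
Definition period u := \big[gcdn/0]_(l < (3 * k).+1 | reach_inb l u u) l.

Lemma period_dvd_short l u : reach_in l u u -> l <= 3 * k -> period u %| l.
Proof.
by move=> /reach_inP cycle le_l; apply: (biggcdn_inf (Ordinal (le_l : l < (3 * k).+1)) cycle).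
Qed.

Lemma period_dvd l u : reach_in l u u -> period u %| l.
Proof.
elim/ltn_ind: l => l IH cycle; have [le_l | lt_l] := leqP l (3 * k).
  exact: period_dvd_short.
have [w [w0 wl ww]] := cycle; have lt_kl : k < l by lia.
have [i [i' [i_gt0 /andP [lt_ii' le_i'k] wii']]] := walk_repeat ww lt_kl.
have le_ii'l : i <= i' <= l by lia.
have dvd_rest : period u %| l - (i' - i).
  apply: IH; first lia.
  by rewrite -{1}w0 -wl; apply: reach_in_cut_loop ww le_ii'l wii'.
have [a le_ak to_i] : exists2 a, a <= k & reach_in a u (w i).
  by apply: (@reach_in_short (i - 0)); rewrite -w0; apply: (reach_in_sub ww); lia.
have [b le_bk from_i] : exists2 b, b <= k & reach_in b (w i) u.
  by apply: (@reach_in_short (l - i')); rewrite wii' -wl; apply: (reach_in_sub ww); lia.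
have loop : reach_in (i' - i) (w i) (w i) by rewrite {2}wii'; apply: (reach_in_sub ww); lia.
have dvd_ab := period_dvd_short (reach_in_cat to_i from_i) (ltac:(lia)).
have := period_dvd_short (reach_in_cat (reach_in_cat to_i loop) from_i) (ltac:(lia)).
rewrite -addnA addnCA (dvdn_addl _ dvd_ab) => dvd_loop.
by rewrite (_ : l = l - (i' - i) + (i' - i)) ?dvdn_add //; lia.
Qed.

Lemma period_dvd_conn a b u v : reach_in a u v -> reach_in b v u -> period u %| period v.
Proof.
move=> uv vu; apply/dvdn_biggcdP => l /reach_inP cycle.
have := period_dvd (reach_in_cat (reach_in_cat uv cycle) vu).
by rewrite -addnA addnCA (dvdn_addl _ (period_dvd (reach_in_cat uv vu))).
Qed.

Lemma period_cycle u : 0 < period u -> exists2 l, 0 < l <= 3 * k & reach_in l u u.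
Proof.
move=> period_gt0.
have [/existsP [l /andP [l_gt0 /reach_inP cycle]] | /existsPn no_cycle] :=
  boolP [exists l : 'I_(3 * k).+1, (0 < l) && reach_inb l u u].
  by exists l; rewrite // l_gt0 -ltnS ltn_ord.
move: period_gt0; rewrite /period big1 // => l cycle.
by have := no_cycle l; rewrite cycle andbT lt0n negbK => /eqP.
Qed.

Definition reach u v := [exists l : 'I_k.+1, reach_inb l u v].

Lemma reachP u v : reflect (exists l, reach_in l u v) (reach u v).
Proof.
apply: (iffP existsP) => [[l /reach_inP] | [l /reach_in_short [l' le_l' uv]]]; first by exists l.
by exists (Ordinal (le_l' : l' < k.+1)); apply/reach_inP.
Qed.

Definition scc u v := reach u v && reach v u.

Lemma scc_refl : reflexive scc.
Proof. by move=> u; rewrite /scc andbb; apply/reachP; exists 0, (fun=> u). Qed.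

Lemma scc_sym : symmetric scc.
Proof. by move=> u v; rewrite /scc andbC. Qed.

Lemma scc_trans : transitive scc.
Proof.
move=> v u x /andP [/reachP [a uv] /reachP [b vu]] /andP [/reachP [c vx] /reachP [d xv]].
apply/andP; split; apply/reachP.
- by exists (a + c); apply: reach_in_cat uv vx.
- by exists (d + b); apply: reach_in_cat xv vu.
Qed.

Lemma period_scc u v : scc u v -> period u = period v.
Proof.
case/andP => /reachP [a uv] /reachP [b vu].
by apply/eqP; rewrite eqn_dvd (period_dvd_conn uv vu) (period_dvd_conn vu uv).
Qed.

Definition scc_rep u := odflt u [pick v | scc u v].

Lemma scc_rep_spec u : scc u (scc_rep u).
Proof. by rewrite /scc_rep; case: pickP => [v //|/(_ u)]; rewrite scc_refl. Qed.

Lemma scc_rep_eq u v : scc u v -> scc_rep u = scc_rep v.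
Proof.
move=> uv; rewrite /scc_rep (eq_pick (_ : scc u =1 scc v)); last first.
  by move=> x; apply/idP/idP; apply: scc_trans; rewrite // scc_sym.
by case: pickP => [// | /(_ v)]; rewrite scc_refl.
Qed.

Lemma reach_in_targets l x y : reach_in l x y -> 0 < l -> y \in targets.
Proof. by move=> [w [_ <- ww]] l_gt0; apply: (walk_targets ww); rewrite l_gt0 /=. Qed.

Lemma scc_rep_targets u : u \in targets -> scc_rep u \in targets.
Proof.
move=> u_t; have /andP [/reachP [l to_rep] _] := scc_rep_spec u.
have [l0 | l_gt0] := posnP l; last exact: reach_in_targets to_rep l_gt0.
by move: to_rep; rewrite l0 => -[w [w0 <- _]]; rewrite w0.
Qed.

Lemma period_targets u : 0 < period u -> u \in targets.
Proof. by case/period_cycle=> l /andP [l_gt0 _] cycle; apply: reach_in_targets cycle l_gt0. Qed.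

Lemma period_le_scc u : 0 < period u -> period u <= #|[set v in targets | scc_rep v == scc_rep u]|.
Proof.
case/period_cycle=> l /andP [l_gt0 _] cycle.
have [l' [w [l'_gt0 w0 wl ww inj_w]]] := simple_cycle cycle l_gt0.
apply: leq_trans (dvdn_leq l'_gt0 (period_dvd (ex_intro _ w (And3 w0 wl ww)))) _.
have -> : l' = #|[set w t | t : 'I_l']|.
  by rewrite card_imset ?card_ord // => s t /(inj_w _ _ (ltn_ord s) (ltn_ord t)) /val_inj.
apply/subset_leq_card/subsetP => _ /imsetP [t _ ->]; rewrite inE; apply/andP; split.
  have [-> | t_gt0] := posnP t; first rewrite w0 -wl.
  - by apply: (walk_targets ww); rewrite l'_gt0 /=.
  - by apply: (walk_targets ww); rewrite t_gt0 ltnW.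
apply/eqP/scc_rep_eq/andP; split; apply/reachP.
- by exists (l' - t); rewrite -wl; apply: (reach_in_sub ww); rewrite ltnW /=.
- by exists (t - 0); rewrite -w0; apply: (reach_in_sub ww); rewrite leq0n ltnW.
Qed.

Definition rep_period u := if scc_rep u == u then period u else 0.

Definition lcm_period := \big[lcmn/1]_(u in targets | rep_period u != 0) rep_period u.

Lemma sum_rep_period : \sum_(u in targets) rep_period u <= k.
Proof.
have <- : \sum_(r in targets) #|[set v in targets | scc_rep v == r]| = k.
  rewrite -[#|targets|]sum1_card [RHS](partition_big scc_rep (mem targets)) /=.
    by apply: eq_bigr => r _; rewrite sum1dep_card.
  exact: scc_rep_targets.
apply: leq_sum => r _; rewrite /rep_period; case: eqP => [rep_r | _] //.
have [-> // | period_gt0] := posnP (period r).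
by rewrite -{2}rep_r; apply: period_le_scc.
Qed.

Lemma lcm_period_le_landau : lcm_period <= landau k.
Proof. exact: lcm_le_landau sum_rep_period. Qed.

Lemma lcm_period_gt0 : 0 < lcm_period.
Proof.
rewrite /lcm_period; elim/big_ind: _ => // [m n m_gt0 n_gt0 | u /andP [_]].
  by rewrite lcmn_gt0 m_gt0.
by rewrite lt0n.
Qed.

Lemma period_dvd_lcm u : 0 < period u -> period u %| lcm_period.
Proof.
move=> period_gt0; have u_rep := scc_rep_spec u.
have rep_period_u : rep_period (scc_rep u) = period u.
  by rewrite /rep_period -(scc_rep_eq u_rep) eqxx -(period_scc u_rep).
apply: (biglcmn_sup (scc_rep u)); last by rewrite rep_period_u.
by rewrite scc_rep_targets ?period_targets // rep_period_u -lt0n.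
Qed.

Definition walk_period (w : nat -> V) l := \big[gcdn/0]_(i < l.+1) period (w i).

Lemma walk_periodP m w l :
  reflect (forall i, i <= l -> m %| period (w i)) (m %| walk_period w l).
Proof.
apply: (iffP (dvdn_biggcdP _ _ _)) => m_dvd i.
  by move=> le_il; apply: (m_dvd (Ordinal (le_il : i < l.+1))).
by move=> _; apply: m_dvd; rewrite -ltnS.
Qed.

Lemma walk_period_dvd w l i : i <= l -> walk_period w l %| period (w i).
Proof. by move=> le_il; apply: (walk_periodP _ _ _ (dvdnn _)). Qed.

Lemma walk_period_gt0 w l : 0 < walk_period w l -> exists2 i, i <= l & 0 < period (w i).
Proof.
move=> period_gt0.
have [/existsP [i wi_gt0] | /existsPn no_period] := boolP [exists i : 'I_l.+1, 0 < period (w i)].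
  by exists i; rewrite // -ltnS.
move: period_gt0; rewrite /walk_period big1 // => i _.
by have := no_period i; rewrite lt0n negbK => /eqP.
Qed.

Lemma walk_period_dvd_lcm w l : 0 < walk_period w l -> walk_period w l %| lcm_period.
Proof.
move=> /[dup] /walk_period_gt0 [i le_il period_gt0] _.
exact: dvdn_trans (walk_period_dvd w le_il) (period_dvd_lcm period_gt0).
Qed.

Lemma scc_in_loop w l i i' t : walk w l -> i <= t <= i' -> i' <= l -> w i = w i' ->
  scc (w t) (w i).
Proof.
move=> ww le_iti' le_i'l wii'; apply/andP; split; apply/reachP.
- by exists (i' - t); rewrite wii'; apply: (reach_in_sub ww); lia.
- by exists (t - i); apply: (reach_in_sub ww); lia.
Qed.

Lemma walk_period_cut_loop w l i i' : walk w l -> i <= i' <= l -> w i = w i' ->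
  walk_period (cut_loop w i i') (l - (i' - i)) = walk_period w l.
Proof.
move=> ww /[dup] le_ii'l /andP [le_ii' le_i'l] wii'.
apply/eqP; rewrite eqn_dvd; apply/andP; split.
  apply/walk_periodP => t le_tl.
  have [t' le_t' ->] : exists2 t', t' <= l - (i' - i) & period (w t) = period (cut_loop w i i' t').
    have [le_ti | lt_it] := leqP t i; first by exists t; rewrite /cut_loop ?le_ti //; lia.
    have [le_i't | lt_ti'] := leqP i' t.
      by exists (t - (i' - i)); rewrite ?cut_loop_shift //; lia.
    exists i; first lia.
    by rewrite /cut_loop leqnn; apply/period_scc/(scc_in_loop ww _ le_i'l wii'); lia.
  exact: walk_period_dvd.
apply/walk_periodP => t le_t; rewrite /cut_loop.
by case: ifP => _; apply: walk_period_dvd; lia.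
Qed.

Lemma walk_shorten w l : walk w l ->
  exists w' l', [/\ w' 0 = w 0, w' l' = w l & walk w' l'] /\
    [/\ l' <= k, walk_period w' l' = walk_period w l & l' = l %[mod walk_period w l]].
Proof.
elim/ltn_ind: l w => l IH w ww.
have [le_lk | lt_kl] := leqP l k; first by exists w, l.
have [i [i' [i_gt0 /andP [lt_ii' le_i'k] wii']]] := walk_repeat ww lt_kl.
have le_ii'l : i <= i' <= l by lia.
have [cut0 cut_end cut_walk] := walk_cut_loop ww le_ii'l wii'.
have [|w' [l' [[w'0 w'l w'w] [le_l'k w'_period l'_mod]]]] := IH _ _ _ cut_walk; first lia.
exists w', l'; rewrite w'0 w'l cut0 cut_end w'_period.
rewrite !(walk_period_cut_loop ww le_ii'l wii') in l'_mod *; split => //; split => //.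
have loop_dvd : walk_period w l %| i' - i.
  apply: dvdn_trans (walk_period_dvd w (_ : i <= l)) _; first lia.
  by apply: period_dvd; rewrite {2}wii'; apply: (reach_in_sub ww); lia.
rewrite l'_mod; apply/eqP; rewrite eq_sym eqn_mod_dvd ?leq_subr // subKn //; lia.
Qed.

Lemma walk_pump w l (ys : nat -> nat) : walk w l ->
    (forall t, t <= l -> reach_in (ys t) (w t) (w t)) ->
  reach_in (l + \sum_(t < l.+1) ys t) (w 0) (w l).
Proof.
move=> ww loops.
suff pump j : j <= l -> reach_in (j + \sum_(t < j.+1) ys t) (w 0) (w j) by apply: pump.
elim: j => [|j IH] le_jl.
  by rewrite big_ord1; apply: loops.
have step : reach_in 1 (w j) (w j.+1) by rewrite -(subSnn j); apply: (reach_in_sub ww); lia.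
have -> : j.+1 + \sum_(t < j.+2) ys t = j + \sum_(t < j.+1) ys t + 1 + ys j.+1.
  by rewrite big_ord_recr /=; lia.
exact: reach_in_cat (reach_in_cat (IH (ltnW le_jl)) step) (loops _ le_jl).
Qed.

Lemma walk_stretch w l x : walk w l -> 0 < walk_period w l -> walk_period w l %| x ->
  (3 * k) * (3 * k) <= x -> reach_in (l + x) (w 0) (w l).
Proof.
move=> ww period_gt0 dvd_x le_x.
pose on_walk z := [exists t : 'I_l.+1, reach_inb z (w t) (w t)].
have [t le_tl /period_cycle [c /andP [c_gt0 le_c] cycle]] := walk_period_gt0 period_gt0.
pose pumped y := exists2 ys : nat -> nat, y = \sum_(t < l.+1) ys t &
  forall t, t <= l -> reach_in (ys t) (w t) (w t).
suff [ys -> loops] : pumped x by apply: walk_pump.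
apply: (frobenius (B := 3 * k) (c := c) (G := on_walk) (P := pumped)) => //.
- by apply/existsP; exists (Ordinal (le_tl : t < l.+1)); apply/reach_inP.
- by exists (fun=> 0) => [|s _]; [rewrite big1 | exists (fun=> w s)].
- move=> y z [ys -> loops] /existsP [s /reach_inP loop] _.
  exists (fun r => ys r + (if r == s then z else 0)) => [|r le_rl].
    rewrite big_split /=; congr (_ + _); rewrite (bigD1 s) //= eqxx big1 ?addn0 // => r.
    by rewrite val_eqE => /negbTE ->.
  case: eqP => [-> | _]; last by rewrite addn0; apply: loops.
  exact: reach_in_cat (loops _ (ltn_ord s)) loop.
- apply: dvdn_trans dvd_x; apply/walk_periodP => s le_sl; apply/dvdn_biggcdP => z loop.
  by apply: (biggcdn_inf z) => //; apply/existsP; exists (Ordinal (le_sl : s < l.+1)).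
- exact: leq_trans (leq_mul le_c (leqnn _)) le_x.
Qed.

(* Cut the walk down to length at most k, then pump it up with cycles at its
   vertices: both the removed and the added lengths are multiples of the walk
   period, which divides [lcm_period]. *)
Lemma reach_in_mod j j' x y : k < j -> (3 * k) * (3 * k) + k <= j' ->
  j = j' %[mod lcm_period] -> reach_in j x y -> reach_in j' x y.
Proof.
move=> lt_kj le_j' j_mod [w [<- <- ww]].
have [w' [l' [[<- <- w'w] [le_l'k w'_period l'_mod]]]] := walk_shorten ww.
have period_gt0 : 0 < walk_period w j.
  by rewrite lt0n; apply/eqP => period0; move: l'_mod; rewrite period0 !modn0; lia.
have dvd_lcm := walk_period_dvd_lcm period_gt0.
rewrite -(subnKC (_ : l' <= j')); last lia.
apply: walk_stretch; rewrite ?w'_period //; last lia.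
rewrite -eqn_mod_dvd; last lia.
by rewrite l'_mod -(modn_dvdm j dvd_lcm) j_mod modn_dvdm.
Qed.

Definition image_step (X : {set V}) := \bigcup_(x in X) delta x.

Lemma iter_image_step i X : iter i image_step X = [set y | [exists x in X, reach_inb i x y]].
Proof.
apply/setP => y; elim: i y => [|i IH] y; rewrite inE.
  by apply/idP/existsP => [Xy | [x /andP [Xx /eqP <-]]] //; exists y; rewrite Xy /=.
rewrite iterS; apply/bigcupP/existsP => [[z] | [x /andP [Xx /reach_inP /reach_inS [z xz zy]]]].
  rewrite IH inE => /existsP [x /andP [Xx /reach_inP xz]] zy.
  by exists x; rewrite Xx; apply/reach_inP/reach_inS; exists z.
by exists z; rewrite // IH inE; apply/existsP; exists x; rewrite Xx; apply/reach_inP.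
Qed.

Lemma iter_image_step_mod i i' X :
    (3 * k) * (3 * k) + k < i -> (3 * k) * (3 * k) + k < i' -> i = i' %[mod lcm_period] ->
  iter i image_step X = iter i' image_step X.
Proof.
move=> lt_i lt_i' ii'; rewrite !iter_image_step; apply/setP => y; rewrite !inE.
by apply/existsP/existsP => -[x /andP [Xx /reach_inP walk_xy]]; exists x;
  rewrite Xx; apply/reach_inP; apply: reach_in_mod walk_xy; lia.
Qed.

Lemma image_step_orbit_bound : exists M, M <= landau k + (3 * k) * (3 * k) + k + 1 /\
  forall X i, exists2 j, j < M & iter i image_step X = iter j image_step X.
Proof.
set N := (3 * k) * (3 * k) + k + 1.
exists (N + lcm_period); split=> [|X i]; first by have := lcm_period_le_landau; lia.
have [lt_iN | le_Ni] := ltnP i N; first by exists i => //; apply: ltn_addr.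
exists (N + (i - N) %% lcm_period); first by rewrite ltn_add2l ltn_mod lcm_period_gt0.
apply: iter_image_step_mod; [rewrite /N in le_Ni; lia | lia | by rewrite modnDmr subnKC].
Qed.

End UnaryAutomaton.

Section NFA.

Variables (Sigma Q : finType) (A : nfa Sigma Q).

Definition has_dfa m := exists M : dfa Sigma 'I_m, forall w, dfa_accepts M w = nfa_accepts A w.

Lemma has_dfa_closed (R : {set {set Q}}) : nfa_init A \in R ->
  (forall S b, S \in R -> nfa_step A S b \in R) -> has_dfa #|R|.
Proof.
move=> R_init R_step.
pose step (i : 'I_#|R|) b := enum_rank_in R_init (nfa_step A (enum_val i) b).
exists (DFA (enum_rank_in R_init (nfa_init A)) step [set i | enum_val i :&: nfa_final A != set0]).
have reach_step w i : enum_val (foldl step i w) = foldl (nfa_step A) (enum_val i) w.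
  by elim: w i => [|b w IH] i //=; rewrite IH enum_rankK_in ?R_step ?enum_valP.
by move=> w; rewrite /dfa_accepts inE reach_step enum_rankK_in.
Qed.

Lemma has_dfa_powerset : has_dfa (2 ^ #|Q|).
Proof.
by rewrite -cardsT -card_powerset; apply: has_dfa_closed => *; rewrite powersetE subsetT.
Qed.

Lemma exists_Qsym_max : 0 < n1 A -> exists a, #|Qsym A a| = n1 A.
Proof.
move=> n1_gt0; have [a0 _ | Sigma0] := pickP (@predT Sigma).
  have [|a max_a] := eq_bigmax (fun a => #|Qsym A a|); first by apply/card_gt0P; exists a0.
  by exists a; rewrite /n1 max_a.
by move: n1_gt0; rewrite /n1 big_pred0.
Qed.

Variables (P : Sigma -> {set Q}) (a : Sigma).
Hypotheses (P_disj : forall b c, b != c -> [disjoint P b & P c])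
  (delta_P : forall q b, nfa_delta A q b \subset P b).

Lemma step_not_a S b : b != a -> nfa_step A S b \subset ~: P a.
Proof.
move=> neq_ba; apply/bigcupsP => q _; apply/subsetP => q' /(subsetP (delta_P q b)) q'_Pb.
by rewrite inE (disjointFr (P_disj neq_ba) q'_Pb).
Qed.

Lemma card_Qsym_le : #|Qsym A a| <= #|P a|.
Proof. by apply/subset_leq_card/bigcupsP => q _; apply: delta_P. Qed.

Variable M : nat.
Hypothesis orbit_a : forall X i,
  exists2 j, j < M & iter i (nfa_step A ^~ a) X = iter j (nfa_step A ^~ a) X.

Definition orbit_starts := nfa_init A |: (powerset (~: P a) :\ set0).

Definition orbit_family : {set {set Q}} :=
  set0 |: [set iter (nat_of_ord j.2) (nfa_step A ^~ a) j.1 | j in setX orbit_starts [set: 'I_M]].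

Lemma card_orbit_family : #|orbit_family| <= 2 ^ #|~: P a| * M.+1.
Proof.
have le_starts : #|orbit_starts| <= 2 ^ #|~: P a|.
  rewrite cardsU1 -card_powerset [#|powerset _|](cardsD1 set0) powersetE sub0set.
  by rewrite leq_add2r leq_b1.
rewrite cardsU1 mulnS; apply: leq_add; first by rewrite (leq_trans (leq_b1 _)) ?expn_gt0.
apply: leq_trans (leq_imset_card _ _) _.
by rewrite cardsX cardsT card_ord leq_mul2r le_starts orbT.
Qed.

Lemma iter_mem_orbit_family T i :
  T \in orbit_starts -> iter i (nfa_step A ^~ a) T \in orbit_family.
Proof.
move=> T_start; have [j lt_jM ->] := orbit_a T i; apply/setU1P; right.
by apply/imsetP; exists (T, Ordinal lt_jM); rewrite ?in_setX ?T_start ?in_setT.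
Qed.

Lemma orbit_family_closed S b : S \in orbit_family -> nfa_step A S b \in orbit_family.
Proof.
case/setU1P => [-> | /imsetP [[T j] /setXP [T_start _] ->]].
  by rewrite /nfa_step big_set0 setU11.
have [-> | neq_ba] := eqVneq b a; first exact: (iter_mem_orbit_family j.+1 T_start).
have [-> | nz_step] := eqVneq (nfa_step A (iter j (nfa_step A ^~ a) T) b) set0.
  exact: setU11.
apply: (iter_mem_orbit_family 0); apply/setU1P; right.
by rewrite in_setD1 nz_step powersetE step_not_a.
Qed.

Lemma has_dfa_orbit_family : exists2 m, m <= 2 ^ #|~: P a| * M.+1 & has_dfa m.
Proof.
exists #|orbit_family|; first exact: card_orbit_family.
by apply: has_dfa_closed orbit_family_closed; apply: (iter_mem_orbit_family 0); rewrite setU11.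
Qed.

End NFA.

Theorem lemma4 :
  exists C : nat,
    forall (Sigma Q : finType) (A : nfa Sigma Q),
      remembers_last A ->
      exists m : nat,
        m <= 2 ^ (#|Q| - n1 A) * (landau (n1 A) + C * (n1 A) ^ 2) /\
        exists M : dfa Sigma 'I_m,
          forall w : seq Sigma, dfa_accepts M w = nfa_accepts A w.
Proof.
exists 12 => Sigma Q A [P [P_disj _ delta_P]].
have [n1_0 | n1_gt0] := posnP (n1 A).
  exists (2 ^ #|Q|); split; last exact: has_dfa_powerset.
  by rewrite n1_0 subn0 muln0 addn0 leq_pmulr ?landau_gt0.
have [a Qa_max] := exists_Qsym_max n1_gt0.
have [M [le_M orbit_a]] := image_step_orbit_bound (fun q => nfa_delta A q a).
have [m le_m dfa_m] := has_dfa_orbit_family P_disj delta_P orbit_a.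
exists m; split => //; apply: leq_trans le_m (leq_mul _ _).
  rewrite leq_pexp2l // cardsCs setCK; have := card_Qsym_le a delta_P; lia.
move: le_M; rewrite /targets Qa_max; nia.
Qed.
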